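(* Suppose $\mathcal{G}$ acts measurably on $\mathcal{X}$ and trivially on $\mathcal{Y}$. Let $\mathcal{X}_\pi$ be a measurable cross-section of $\mathcal{X}$ with projection $\pi$. Let $\mathcal{F}$ be a hypothesis class of $\mathcal{G}$-invariant functions. Let $\mathsf{T}=(X,Y,\ell)$ be any task, write $X_\pi=\pi(X)$ and define $\mathsf{T}_\pi=(X_\pi,Y,\ell)$. Assume there exists a probability measure $\nu$ on $\mathcal{G}$ such that $X\overset{d}{=}GX_\pi$ with $G\sim\nu$ independent of $X_\pi$. Then $\mathsf{T}$ and $\mathsf{T}_\pi$ are $(\mathcal{F},\mathcal{G})$-equivalent.
   Context: $\mathcal{G}$ is a compact, second countable, Hausdorff topological group; $\mathcal{X}$ is a nonempty Polish space and $\mathcal{Y}$ a standard Borel space, both with Borel $\sigma$-algebras; $\mathcal{Z}=\mathcal{X}\times\mathcal{Y}$ with action $g(x,y)=(gx,gy)$. A task is a tuple $(X,Y,\ell)$ with $X,Y$ random elements of $\mathcal{X},\mathcal{Y}$ and $\ell:\mathcal{Y}\times\mathcal{Y}\to\mathbb{R}_+$ integrable; it is assumed that $\mathbb{E}[\ell(f(X),Y)]<\infty$ for all $f\in\mathcal{F}$. A hypothesis class $\mathcal{F}$ is a set of measurable functions $\mathcal{X}\to\mathcal{Y}$; a learning algorithm is a map $\mathtt{alg}:\bigcup_{i\in\mathbb{N}}\mathcal{Z}^i\to\mathcal{F}$. $\mathtt{alg}$ learns $\mathcal{F}$ with respect to $(X,Y,\ell)$ if there is $m:(0,1)^2\to\mathbb{N}$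 such that for all $\epsilon,\delta\in(0,1)$ and $n\ge m(\epsilon,\delta)$, $\mathbb{P}\big(\mathbb{E}[\ell(f_S(X),Y)\mid S]\le\inf_{f\in\mathcal{F}}\mathbb{E}[\ell(f(X),Y)]+\epsilon\big)\ge1-\delta$, where $S$ is a tuple of $n$ i.i.d. copies of $(X,Y)$ independent of $(X,Y)$ and $f_S=\mathtt{alg}(S)$; its sample complexity $m_{\mathtt{alg},\mathsf{T}}$ is the pointwise minimum of all such $m$. $\mathtt{alg}$ is $\mathcal{G}$-invariant if $\mathtt{alg}((g_1x_1,g_1y_1),\dots,(g_nx_n,g_ny_n))=\mathtt{alg}((x_1,y_1),\dots,(x_n,y_n))$ for all $n$, $(x_i,y_i)\in\mathcal{Z}$, $g_i\in\mathcal{G}$. Tasks $\mathsf{T},\mathsf{T}'$ are $(\mathcal{F},\mathcal{G})$-equivalent if for every $\mathcal{G}$-invariant learning algorithm $\mathtt{alg}$: $\mathtt{alg}$ learns $\mathcal{F}$ w.r.t. $\mathsf{T}$ iff it does w.r.t. $\mathsf{T}'$, and $m_{\mathtt{alg},\mathsf{T}}=m_{\mathtt{alg},\mathsf{T}'}$. A measurable cross-section is a measurable $\mathcal{X}_\pi\subseteq\mathcal{X}$ containing exactly one point of each $\mathcal{G}$-orbit, such that the map $\pi:\mathcal{X}\to\mathcal{X}_\pi$ sending $x$ to the element of $\mathcal{X}_\pi$ in its orbit is measurable (trace $\sigma$-algebra on $\mathcal{X}_\pi$). $f$ is $\mathcal{G}$-invariant if $f(gx)=f(x)$ for all $g,x$.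 *)

From HB Require Import structures.
From mathcomp Require Import all_boot all_order all_algebra.
From mathcomp Require Import all_classical all_reals all_analysis.
Set Implicit Arguments. Unset Strict Implicit. Unset Printing Implicit Defensive.
Import Order.TTheory GRing.Theory Num.Theory.
Local Open Scope classical_set_scope.
Local Open Scope ring_scope.

Definition borel (T : ptopologicalType) : Type :=
  @g_sigma_algebraType T (@open T).

Definition polish (R : realType) (T : topologicalType) : Prop :=
  (exists2 D : set T, countable D & closure D = setT) /\
  exists d : T -> T -> R,
    (forall x y, 0 <= d x y) /\
    (forall x y, d x y = 0 <-> x = y) /\
    (forall x y, d x y = d y x) /\
    (forall x y z, d x z <= d x y + d y z) /\
    (forall A : set T, open A <->
       (forall x, A x -> exists2 e : R, 0 < e & [set y | d x y < e] `<=` A)) /\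
    (forall u : nat -> T,
          (forall e : R, 0 < e -> exists N, forall m n, (N <= m)%N -> (N <= n)%N ->
             d (u m) (u n) < e) ->
          exists l : T, u @ \oo --> l).

Definition standard_borel (R : realType) dY (Y : measurableType dY) : Prop :=
  exists (P : ptopologicalType) (e : Y -> borel P),
    [/\ polish R P, bijective e, measurable_fun [set: Y] e
      & forall A : set Y, measurable A -> measurable (e @` A)].

Definition compact_sc_hausdorff_group (G : topologicalType)
  (mul : G -> G -> G) (inv : G -> G) (one : G) : Prop :=
  (forall a b c, mul a (mul b c) = mul (mul a b) c) /\
  (forall a, mul one a = a /\ mul a one = a) /\
  (forall a, mul (inv a) a = one /\ mul a (inv a) = one) /\
  continuous (fun p : G * G => mul p.1 p.2) /\
  continuous inv /\
  compact [set: G] /\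
  hausdorff_space G /\
  @second_countable G.

Definition is_action (G X : Type) (mul : G -> G -> G) (one : G)
  (act : G -> X -> X) : Prop :=
  (forall x, act one x = x) /\
  (forall g h x, act (mul g h) x = act g (act h x)).

Definition measurable_action (G X : ptopologicalType) (act : G -> X -> X) : Prop :=
  measurable_fun [set: borel G * borel X] (fun p : borel G * borel X => act p.1 p.2 : borel X).

Definition orbit_rel (G X : Type) (act : G -> X -> X) (x z : X) : Prop :=
  exists g, z = act g x.

(* Measurable cross-section Xpi with projection pi. Since Xpi is measurable,
   measurability of pi into the trace sigma-algebra on Xpi is the same as
   measurability of pi as a map into X. *)
Definition measurable_cross_section (G X : ptopologicalType) (act : G -> X -> X)
  (Xpi : set X) (pi : X -> X) : Prop :=
  [/\ measurable (Xpi : set (borel X)),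
      (forall x, exists! z, Xpi z /\ orbit_rel act x z),
      (forall x, Xpi (pi x) /\ orbit_rel act x (pi x))
    & measurable_fun [set: borel X] (pi : borel X -> borel X)].

Definition invariant_fun (G X Y : Type) (act : G -> X -> X) (f : X -> Y) : Prop :=
  forall g x, f (act g x) = f x.

Section Learning.
Context (R : realType) (X : ptopologicalType) (dY : measure_display)
        (Y : measurableType dY).

Definition Z := (borel X * Y)%type.

Definition law dO (O : measurableType dO) (P : set O -> \bar R)
  (Xr : O -> X) (Yr : O -> Y) : set Z -> \bar R :=
  pushforward P (fun w => ((Xr w : borel X), Yr w)).

Definition risk (mu : set Z -> \bar R) (l : Y -> Y -> R) (f : X -> Y) : \bar R :=
  (\int[mu]_z (l (f z.1) z.2)%:E)%E.

Fixpoint iid (mu : set Z -> \bar R) (n : nat) : set (n.-tuple Z) -> \bar R :=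
  match n with
  | 0 => fun A => ((\1_A ([tuple] : 0.-tuple Z) : R)%:E)
  | n'.+1 => fun A =>
      (\int[mu]_z (@iid mu n' [set t | A (cons_tuple z t)]))%E
  end.

Definition algorithm := forall n : nat, n.-tuple Z -> (X -> Y).

Definition alg_invariant (G : Type) (actX : G -> X -> X) (actY : G -> Y -> Y)
  (alg : algorithm) : Prop :=
  forall n (s : n.-tuple Z) (gs : n.-tuple G),
    alg n [tuple ((actX (tnth gs i) (tnth s i).1 : borel X),
                  actY (tnth gs i) (tnth s i).2) | i < n] = alg n s.

(* the event {E[l(f_S(X),Y) | S] <= inf_F risk + eps} for samples of size n;
   E[l(f_S(X),Y) | S] = risk mu l (f_S) since S is independent of (X,Y) *)
Definition good_event (F : set (X -> Y)) (alg : algorithm)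
  (mu : set Z -> \bar R) (l : Y -> Y -> R) (eps : R) (n : nat) : set (n.-tuple Z) :=
  [set s | (risk mu l (alg n s) <= ereal_inf [set risk mu l f | f in F] + eps%:E)%E].

Definition good (F : set (X -> Y)) (alg : algorithm)
  (mu : set Z -> \bar R) (l : Y -> Y -> R) (eps delta : R) (n : nat) : Prop :=
  measurable (@good_event F alg mu l eps n) /\
  ((1 - delta)%:E <= @iid mu n (@good_event F alg mu l eps n))%E.

Definition in01 (x : R) : Prop := 0 < x < 1.

Definition learns (F : set (X -> Y)) (alg : algorithm)
  (mu : set Z -> \bar R) (l : Y -> Y -> R) : Prop :=
  exists m : R -> R -> nat, forall eps delta, in01 eps -> in01 delta ->
    forall n, (m eps delta <= n)%N -> good F alg mu l eps delta n.

Definition is_sample_complexity (F : set (X -> Y)) (alg : algorithm)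
  (mu : set Z -> \bar R) (l : Y -> Y -> R) (m : R -> R -> nat) : Prop :=
  forall eps delta, in01 eps -> in01 delta ->
    (forall n, (m eps delta <= n)%N -> good F alg mu l eps delta n) /\
    (forall N, (forall n, (N <= n)%N -> good F alg mu l eps delta n) ->
       (m eps delta <= N)%N).

Definition FG_equivalent (F : set (X -> Y)) (G : Type)
  (actX : G -> X -> X) (actY : G -> Y -> Y)
  (mu1 : set Z -> \bar R) (l1 : Y -> Y -> R)
  (mu2 : set Z -> \bar R) (l2 : Y -> Y -> R) : Prop :=
  forall alg : algorithm, (forall n s, F (alg n s)) -> alg_invariant actX actY alg ->
    (learns F alg mu1 l1 <-> learns F alg mu2 l2) /\
    (forall m, is_sample_complexity F alg mu1 l1 m <->
               is_sample_complexity F alg mu2 l2 m).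

End Learning.

Arguments good_event {R X dY Y} F alg mu l eps n.
Arguments iid {R X dY Y} mu n.

From HB Require Import structures.
From mathcomp Require Import all_boot all_order all_algebra.
From mathcomp Require Import all_classical all_reals all_analysis.
From mathcomp Require Import measurable_realfun.
Set Implicit Arguments. Unset Strict Implicit. Unset Printing Implicit Defensive.
Import Order.TTheory GRing.Theory Num.Theory.
Local Open Scope classical_set_scope.
Local Open Scope ring_scope.

(* Every f in F is G-invariant and pi x lies in the orbit of x, so f (pi x) = f x:
   the risk of f is the same for T and T_pi. A G-invariant algorithm likewise
   returns the same hypothesis on a sample s and on its coordinatewise
   projection, so the event "the returned hypothesis is eps-good" is invariant
   under the projection. The law of T_pi is the pushforward of the law of T by
   the idempotent projection z |-> (pi z.1, z.2), and the n-fold products of the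
   two laws agree on such invariant events. Hence "good" holds for T iff it
   holds for T_pi, which gives both learnability and the sample complexities. *)

Lemma map_tuple_cons (T U : Type) (f : T -> U) n x (t : n.-tuple T) :
  map_tuple f (cons_tuple x t) = cons_tuple (f x) (map_tuple f t).
Proof. exact: val_inj. Qed.

Lemma map_tuple_idem (T : Type) (f : T -> T) n (t : n.-tuple T) :
  (forall x, f (f x) = f x) -> map_tuple f (map_tuple f t) = map_tuple f t.
Proof. by move=> fK; apply: val_inj; rewrite /= -map_comp; apply: eq_map => x /=. Qed.

Section cons_tuple_measure.
Context (R : realType) d (T : measurableType d).

Definition cons_pair n (p : T * n.-tuple T) : n.+1.-tuple T := cons_tuple p.1 p.2.

Lemma measurable_cons_pair n : measurable_fun [set: T * n.-tuple T] (@cons_pair n).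
Proof. exact: measurable_cons measurable_fst measurable_snd. Qed.

HB.instance Definition _ n :=
  isMeasurableFun.Build _ _ _ _ (@cons_pair n) (@measurable_cons_pair n).

Lemma cons_sectionE n (A : set (n.+1.-tuple T)) z :
  [set t | A (cons_tuple z t)] = xsection (@cons_pair n @^-1` A) z.
Proof. by apply/seteqP; split => t; rewrite /xsection /= in_setE. Qed.

Lemma measurable_cons_section n (A : set (n.+1.-tuple T)) z :
  measurable A -> measurable [set t | A (cons_tuple z t)].
Proof.
move=> mA; rewrite cons_sectionE; apply: measurable_xsection.
by rewrite -[X in measurable X]setTI; exact: measurable_cons_pair.
Qed.

Lemma measurable_fun_cons_section n
    (m : {sigma_finite_measure set (n.-tuple T) -> \bar R}) (A : set (n.+1.-tuple T)) :
  measurable A ->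
  measurable_fun [set: T] (fun z => m [set t | A (cons_tuple z t)] : \bar R).
Proof.
move=> mA; under eq_fun do rewrite cons_sectionE.
apply: measurable_fun_xsection.
by rewrite -[X in measurable X]setTI; exact: measurable_cons_pair.
Qed.

End cons_tuple_measure.

Section iid.
Context (R : realType) (X : ptopologicalType) (dY : measure_display)
  (Y : measurableType dY).
Local Open Scope ereal_scope.
Local Notation Z := (Z X Y).

Lemma iid_probability (mu : probability Z R) n :
  exists m : probability (n.-tuple Z) R, iid mu n = m.
Proof.
elim: n => [|n [m IH]].
  by exists \d_([tuple] : 0.-tuple Z); apply/funext => A /=; rewrite diracE.
exists (distribution (mu \x m) (@cons_pair _ _ n)); apply/funext => A /=.
rewrite /distribution /pushforward /product_measure1 /=.
by apply: eq_integral => z _; rewrite IH cons_sectionE.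
Qed.

Variables (mu : probability Z R) (proj : Z -> Z).
Hypothesis mproj : measurable_fun [set: Z] proj.
Hypothesis projK : forall z, proj (proj z) = proj z.

Definition proj_invariant n (A : set (n.-tuple Z)) :=
  forall s, A s <-> A (map_tuple proj s).

Lemma proj_invariant_cons_section n (A : set (n.+1.-tuple Z)) z :
  proj_invariant A -> proj_invariant [set t | A (cons_tuple z t)].
Proof.
move=> iA s /=; rewrite iA map_tuple_cons [X in _ <-> X]iA map_tuple_cons.
by rewrite map_tuple_idem.
Qed.

Lemma cons_section_proj n (A : set (n.+1.-tuple Z)) z :
  proj_invariant A ->
  [set t | A (cons_tuple (proj z) t)] = [set t | A (cons_tuple z t)].
Proof.
move=> iA; apply/seteqP; split => t /=;
  by rewrite iA [X in _ -> X]iA !map_tuple_cons projK.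
Qed.

Lemma iid_pushforward_proj n (A : set (n.-tuple Z)) :
  measurable A -> proj_invariant A -> iid (pushforward mu proj) n A = iid mu n A.
Proof.
elim: n A => [//|n IH] A mA iA /=.
have [m iidE] := iid_probability mu n.
transitivity (\int[pushforward mu proj]_z m [set t | A (cons_tuple z t)]).
  apply: eq_integral; first exact: mproj.
  move=> z _; rewrite IH -?iidE //.
    exact: measurable_cons_section.
  exact: proj_invariant_cons_section.
rewrite ge0_integral_pushforward //; last exact: measurable_fun_cons_section.
rewrite preimage_setT; apply: eq_integral => z _.
by rewrite /comp cons_section_proj // iidE.
Qed.

Lemma good_pushforward_proj (F : set (X -> Y)) (alg : algorithm X Y) l :
  (forall f, F f -> risk (pushforward mu proj) l f = risk mu l f) ->
  (forall n s, F (alg n s)) ->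
  (forall n (s : n.-tuple Z), alg n (map_tuple proj s) = alg n s) ->
  good F alg (pushforward mu proj) l = good F alg mu l.
Proof.
move=> riskE Falg algE.
apply/funext => eps; apply/funext => delta; apply/funext => n.
have eventE :
    good_event F alg (pushforward mu proj) l eps n = good_event F alg mu l eps n.
  have infE :
      [set risk (pushforward mu proj) l f | f in F] = [set risk mu l f | f in F].
    by apply/seteqP; split => _ [f Ff <-]; exists f => //; rewrite riskE.
  by apply/seteqP; split => s; rewrite /good_event /= infE riskE.
have ievent : proj_invariant (good_event F alg mu l eps n).
  by move=> s; rewrite /good_event /= algE.
rewrite /good eventE; apply/propext; split => -[mE goodE]; split => //.
  by rewrite -iid_pushforward_proj.
by rewrite iid_pushforward_proj.
Qed.

End iid.

Lemma FG_equivalent_of_good (R : realType) (Xs : ptopologicalType)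
    (dY : measure_display) (Ys : measurableType dY) (F : set (Xs -> Ys)) (G : Type)
    (actX : G -> Xs -> Xs) (actY : G -> Ys -> Ys)
    (mu1 mu2 : set (Z Xs Ys) -> \bar R) (l1 l2 : Ys -> Ys -> R) :
  (forall alg, (forall n s, F (alg n s)) -> alg_invariant actX actY alg ->
     good F alg mu1 l1 = good F alg mu2 l2) ->
  FG_equivalent F actX actY mu1 l1 mu2 l2.
Proof. by move=> goodE alg Falg ialg; rewrite /learns /is_sample_complexity goodE. Qed.

Lemma law_probability (R : realType) (Xs : ptopologicalType)
    (dY : measure_display) (Ys : measurableType dY)
    (dO : measure_display) (Omega : measurableType dO)
    (P : probability Omega R) (X : Omega -> Xs) (Y : Omega -> Ys) :
  measurable_fun [set: Omega] (X : Omega -> borel Xs) ->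
  measurable_fun [set: Omega] Y ->
  exists mu : probability (Z Xs Ys) R, law P X Y = mu.
Proof.
move=> mX mY.
have mXY : measurable_fun [set: Omega] (fun w => ((X w : borel Xs), Y w)).
  exact: measurable_fun_pair.
pose XY : {mfun Omega >-> Z Xs Ys} :=
  HB.pack (fun w => ((X w : borel Xs), Y w)) (isMeasurableFun.Build _ _ _ _ _ mXY).
by exists (distribution P XY).
Qed.

Definition proj_input (Xs : ptopologicalType) (dY : measure_display)
    (Ys : measurableType dY) (pi : Xs -> Xs) (z : Z Xs Ys) : Z Xs Ys :=
  ((pi z.1 : borel Xs), z.2).

Section cross_section.
Context (R : realType) (G Xs : ptopologicalType) (act : G -> Xs -> Xs)
  (Xpi : set Xs) (pi : Xs -> Xs) (dY : measure_display) (Ys : measurableType dY).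
Hypothesis Hpi : measurable_cross_section act Xpi pi.

Lemma cross_section_projK (one : G) :
  (forall x, act one x = x) -> forall x, pi (pi x) = pi x.
Proof.
case: Hpi => _ uniq pi_orbit _ act1 x.
have [z [_ zE]] := uniq (pi x).
rewrite -(zE _ (pi_orbit (pi x))); apply: zE; split; first exact: (pi_orbit x).1.
by exists one; rewrite act1.
Qed.

Lemma invariant_fun_cross_section (Y : Type) (f : Xs -> Y) :
  invariant_fun act f -> forall x, f (pi x) = f x.
Proof. by case: Hpi => _ _ pi_orbit _ finv x; have [_ [g ->]] := pi_orbit x. Qed.

Lemma measurable_proj_input : measurable_fun [set: Z Xs Ys] (proj_input pi).
Proof.
case: Hpi => _ _ _ mpi; apply: measurable_fun_pair => //=.
exact: measurableT_comp mpi measurable_fst.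
Qed.

Lemma risk_pushforward_proj_input (mu : {measure set Z Xs Ys -> \bar R})
    (l : Ys -> Ys -> R) (f : Xs -> Ys) :
  (forall y y', 0 <= l y y') ->
  measurable_fun [set: Ys * Ys] (fun p => l p.1 p.2) ->
  measurable_fun [set: borel Xs] (f : borel Xs -> Ys) -> invariant_fun act f ->
  risk (pushforward mu (proj_input pi)) l f = risk mu l f.
Proof.
move=> l0 ml mf finv; rewrite /risk ge0_integral_pushforward //.
- rewrite preimage_setT; apply: eq_integral => z _.
  by rewrite /comp /= invariant_fun_cross_section.
- exact: measurable_proj_input.
- apply/measurable_EFinP.
  have mfz : measurable_fun [set: Z Xs Ys] (fun z : Z Xs Ys => (f z.1, z.2)).
    exact: measurable_fun_pair (measurableT_comp mf measurable_fst) measurable_snd.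
  exact: measurableT_comp ml mfz.
- by move=> z _; rewrite lee_fin.
Qed.

Lemma alg_invariant_proj_input (alg : algorithm Xs Ys) :
  alg_invariant act (fun _ y => y) alg ->
  forall n (s : n.-tuple (Z Xs Ys)), alg n (map_tuple (proj_input pi) s) = alg n s.
Proof.
case: Hpi => _ _ pi_orbit _ ialg n s.
pose g (z : Z Xs Ys) := projT1 (cid (pi_orbit z.1).2).
rewrite -(ialg n s (map_tuple g s)); congr (alg n _); apply: eq_from_tnth => i.
by rewrite tnth_map tnth_mktuple tnth_map /proj_input /g; case: cid => /= h <-.
Qed.

End cross_section.

Theorem theorem6p6
  (R : realType)
  (* the group G: compact, second countable, Hausdorff topological group *)
  (G : ptopologicalType) (mul : G -> G -> G) (inv : G -> G) (one : G)
  (HG : compact_sc_hausdorff_group mul inv one)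
  (* the input space: nonempty Polish space with Borel sigma-algebra *)
  (Xs : ptopologicalType) (HXs : polish R Xs)
  (* the output space: standard Borel space *)
  (dY : measure_display) (Ys : measurableType dY) (HYs : standard_borel R Ys)
  (* G acts measurably on Xs (and trivially on Ys) *)
  (act : G -> Xs -> Xs) (Hact : is_action mul one act)
  (Hmact : measurable_action act)
  (* measurable cross-section *)
  (Xpi : set Xs) (pi : Xs -> Xs) (Hpi : measurable_cross_section act Xpi pi)
  (* hypothesis class of measurable G-invariant functions *)
  (F : set (Xs -> Ys))
  (HFm : forall f, F f -> measurable_fun [set: borel Xs] (f : borel Xs -> Ys))
  (HFinv : forall f, F f -> invariant_fun act f)
  (* the task T = (X, Y, l) *)
  (dO : measure_display) (Omega : measurableType dO) (P : probability Omega R)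
  (X : Omega -> Xs) (Y : Omega -> Ys) (l : Ys -> Ys -> R)
  (HX : measurable_fun [set: Omega] (X : Omega -> borel Xs))
  (HY : measurable_fun [set: Omega] Y)
  (Hl0 : forall y y', 0 <= l y y')
  (Hlm : measurable_fun [set: Ys * Ys] (fun p : Ys * Ys => l p.1 p.2))
  (Hfin : forall f, F f -> (risk (law P X Y) l f < +oo)%E)
  (* X =d G X_pi with G ~ nu independent of X_pi *)
  (Hdist : exists nu : probability (borel G) R,
     forall A : set (borel Xs), measurable A ->
       pushforward P (X : Omega -> borel Xs) A =
       pushforward (nu \x pushforward P ((pi \o X) : Omega -> borel Xs))%E
                   (fun p : borel G * borel Xs => (act p.1 p.2 : borel Xs)) A) :
  FG_equivalent F act (fun (_ : G) (y : Ys) => y)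
    (law P X Y) l (law P (pi \o X) Y) l.
Proof.
have [mu lawE] := law_probability P HX HY.
have lawpiE : law P (pi \o X) Y = pushforward mu (proj_input pi) by rewrite -lawE.
rewrite lawpiE lawE; apply: FG_equivalent_of_good => alg Falg ialg.
symmetry; apply: good_pushforward_proj => //.
- exact: measurable_proj_input Hpi.
- by move=> z; rewrite /proj_input /= (cross_section_projK Hpi (proj1 Hact)).
- move=> f Ff.
  exact: risk_pushforward_proj_input Hpi _ _ _ Hl0 Hlm (HFm f Ff) (HFinv f Ff).
- by move=> n s; rewrite (alg_invariant_proj_input Hpi ialg).
Qed.
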